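(* There exists an $\mathrm{STC}$-formula $\varphi_M(x_1,x_2,y)$ over the vocabulary $\{E\}$ such that for every graph $G=(V,E)$ and all pairs $(v_1,v_2)\in V^2$, the set $\{u\in V\mid G\models\varphi_M[v_1,v_2,u]\}$ is the module spanned by $v_1$ and $v_2$.
   Context: Graphs are finite, simple, undirected, with nonempty vertex set, viewed as structures $(V,E)$. A module of $G=(V,E)$ is a nonempty $M\subseteq V$ such that every $u\in V\setminus M$ is adjacent either to all or to none of the vertices of $M$. For $v,w\in V$, $M_{v,w}$ is the intersection of all modules of $G$ containing $v$ and $w$ (this is the smallest module containing $v$ and $w$); $v,w$ span $M_{v,w}$. $\mathrm{STC}$ (symmetric transitive closure logic) is first-order logic extended by the operator $[\mathrm{stc}_{\bar u,\bar v}\psi](\bar u',\bar v')$, which holds iff $(\bar u',\bar v')$ lies in the symmetric transitive closure of the relation defined by $\psi$ on pairs of tuples. *)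

From mathcomp Require Import all_boot.
From Stdlib Require Relation_Operators.

Set Implicit Arguments.
Unset Strict Implicit.
Unset Printing Implicit Defensive.

Definition simple_graph (V : finType) (E : rel V) : Prop :=
  [/\ 0 < #|V|, symmetric E & irreflexive E].

Definition is_module (V : finType) (E : rel V) (M : {set V}) : bool :=
  (M != set0) &&
  [forall u in ~: M, [forall m in M, E u m] || [forall m in M, ~~ E u m]].

Definition span_module (V : finType) (E : rel V) (v w : V) : {set V} :=
  \bigcap_(M : {set V} | is_module E M && (v \in M) && (w \in M)) M.

Inductive stc_form : Type :=
  | FEq   : nat -> nat -> stc_form
  | FEdge : nat -> nat -> stc_form
  | FNot  : stc_form -> stc_form
  | FAnd  : stc_form -> stc_form -> stc_form
  | FOr   : stc_form -> stc_form -> stc_form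
  | FEx   : nat -> stc_form -> stc_form
  | FAll  : nat -> stc_form -> stc_form
  (* FStc k us vs psi us' vs'  is  [stc_{us,vs} psi](us',vs') with k-tuples *)
  | FStc  : forall k : nat, k.-tuple nat -> k.-tuple nat -> stc_form ->
            k.-tuple nat -> k.-tuple nat -> stc_form.

Fixpoint fv (phi : stc_form) : seq nat :=
  match phi with
  | FEq x y | FEdge x y => [:: x; y]
  | FNot p => fv p
  | FAnd p q | FOr p q => fv p ++ fv q
  | FEx x p | FAll x p => [seq z <- fv p | z != x]
  | FStc _ us vs p us' vs' =>
      [seq z <- fv p | (z \notin (us : seq nat)) && (z \notin (vs : seq nat))]
        ++ us' ++ vs'
  end.

Definition upd (V : Type) (a : nat -> V) (x : nat) (v : V) : nat -> V :=
  fun z => if z == x then v else a z.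

Fixpoint upds (V : Type) (a : nat -> V) (xs : seq nat) (vs : seq V) : nat -> V :=
  match xs, vs with
  | x :: xs', v :: vs' => upds (upd a x v) xs' vs'
  | _, _ => a
  end.

Definition stc_closure (T : Type) (R : T -> T -> Prop) : T -> T -> Prop :=
  Relation_Operators.clos_trans T (fun s t => R s t \/ R t s).

Fixpoint sat (V : finType) (E : rel V) (phi : stc_form) (a : nat -> V) : Prop :=
  match phi with
  | FEq x y => a x = a y
  | FEdge x y => E (a x) (a y)
  | FNot p => ~ sat E p a
  | FAnd p q => sat E p a /\ sat E q a
  | FOr p q => sat E p a \/ sat E q a
  | FEx x p => exists v : V, sat E p (upd a x v)
  | FAll x p => forall v : V, sat E p (upd a x v)
  | FStc k us vs p us' vs' =>
      stc_closure
        (fun s t : k.-tuple V => sat E p (upds (upds a us s) vs t))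
        [tuple of map a us'] [tuple of map a vs']
  end.

(* A step on pairs of vertices either swaps the pair, or replaces (x, y) by
   (x, z) when z is adjacent to exactly one of x, y and y is adjacent to
   exactly one of x, z.  A vertex adjacent to exactly one of two members of a
   module lies in the module, so modules are closed under steps and contain
   every vertex reachable from (v, w).  Conversely, by symmetry of E, a vertex
   distinguishing a reachable pair is itself the second component of a
   reachable pair; hence a vertex u outside the set C of reachable vertices
   sees the two components of every reachable pair alike, and propagating this
   along the steps shows that u sees all of C alike: C is a module.  Steps are
   first-order definable, so M_{v,w} is defined by
   exists z, [stc_{(x,y),(x',y')} step]((v, w), (u, z)). *)

From Stdlib Require Import Relation_Operators.
From mathcomp Require Import all_boot.
From mathcomp Require Import boolp.

Set Implicit Arguments.
Unset Strict Implicit.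
Unset Printing Implicit Defensive.

Section StcClosure.
Variables (T : Type) (R : T -> T -> Prop).

Lemma stc_closure_invariant (P : T -> Prop) s t :
  (forall p q, P p -> R p q \/ R q p -> P q) ->
  P s -> stc_closure R s t -> P t.
Proof.
move=> PR Ps st; elim: st Ps => [p q Rpq | p q r _ IHpq _ IHqr] Pp.
- exact: PR Pp Rpq.
- exact/IHqr/IHpq.
Qed.

Lemma stc_closure_hom (U : Type) (R' : U -> U -> Prop) (f : T -> U) s t :
  (forall p q, R p q -> R' (f p) (f q)) ->
  stc_closure R s t -> stc_closure R' (f s) (f t).
Proof.
move=> fR; elim=> [p q [Rpq | Rqp] | p q r _ IHpq _ IHqr].
- by apply: t_step; left; apply: fR.
- by apply: t_step; right; apply: fR.
- exact: t_trans IHpq IHqr.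
Qed.

End StcClosure.

Lemma stc_closure_bij (T U : Type) (R : T -> T -> Prop) (R' : U -> U -> Prop)
    (f : T -> U) (g : U -> T) :
  cancel f g -> cancel g f -> (forall p q, R p q <-> R' (f p) (f q)) ->
  forall s t, stc_closure R s t <-> stc_closure R' (f s) (f t).
Proof.
move=> fK gK fR s t; split; first by apply: stc_closure_hom => p q /fR.
move/(stc_closure_hom (f := g)); rewrite !fK; apply=> p q.
by rewrite -{1}(gK p) -{1}(gK q) => /fR.
Qed.

Definition splits_form (z x y : nat) : stc_form :=
  FOr (FAnd (FEdge z x) (FNot (FEdge z y)))
      (FAnd (FNot (FEdge z x)) (FEdge z y)).

(* Variables 4, 5 hold the source and 6, 7 the target pair of a step. *)
Definition span_step_form : stc_form :=
  FOr (FAnd (FEq 6 5) (FEq 7 4))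
      (FAnd (FEq 6 4) (FAnd (splits_form 7 4 5) (splits_form 5 4 7))).

Definition span_form : stc_form :=
  FEx 3 (@FStc 2 [tuple 4; 5] [tuple 6; 7] span_step_form
                 [tuple 0; 1] [tuple 2; 3]).

Section SpanStep.
Variables (V : finType) (E : rel V).

Definition splits (z x y : V) : bool := E z x != E z y.

Definition span_step (p q : V * V) : Prop :=
  (q.1 = p.2 /\ q.2 = p.1) \/
  q.1 = p.1 /\ splits q.2 p.1 p.2 /\ splits p.2 p.1 q.2.

Lemma splitsC z x y : splits z x y = splits z y x.
Proof. by rewrite /splits eq_sym. Qed.

Lemma sat_splits_form z x y b :
  sat E (splits_form z x y) b <-> splits (b z) (b x) (b y).
Proof. by rewrite /splits /=; case: (E _ _); case: (E _ _); intuition. Qed.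

Lemma sat_span_step_form b x y x' y' :
  sat E span_step_form
    (upds (upds b [:: 4; 5] [:: x; y]) [:: 6; 7] [:: x'; y'])
  <-> span_step (x, y) (x', y').
Proof.
by rewrite /span_step_form; cbn -[splits_form]; rewrite !sat_splits_form.
Qed.

Definition pair_of_tuple (s : 2.-tuple V) : V * V :=
  (tnth s ord0, tnth s ord_max).

Definition tuple_of_pair (p : V * V) : 2.-tuple V := [tuple p.1; p.2].

Lemma pair_of_tupleK : cancel pair_of_tuple tuple_of_pair.
Proof. by case=> [[|x [|y []]] // sP]; apply: val_inj. Qed.

Lemma tuple_of_pairK : cancel tuple_of_pair pair_of_tuple.
Proof. by case. Qed.

Lemma sat_span_step_form_tuple b (s t : 2.-tuple V) :
  sat E span_step_form (upds (upds b [tuple 4; 5] s) [tuple 6; 7] t)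
  <-> span_step (pair_of_tuple s) (pair_of_tuple t).
Proof.
case: s => [[|x [|y []]] //= sP]; case: t => [[|x' [|y' []]] //= tP].
exact: sat_span_step_form.
Qed.

Lemma sat_span_form b :
  sat E span_form b <->
  exists y, stc_closure span_step (b 0, b 1) (b 2, y).
Proof.
have stc_pairs c := stc_closure_bij pair_of_tupleK tuple_of_pairK
  (sat_span_step_form_tuple c).
split=> -[y cl]; exists y.
- exact: (stc_pairs (upd b 3 y) _ _).1 cl.
- pose c := upd b 3 y.
  exact: (stc_pairs c [tuple of map c [tuple 0; 1]]
                      [tuple of map c [tuple 2; 3]]).2 cl.
Qed.

Lemma splits_module_mem (M : {set V}) z x y :
  is_module E M -> x \in M -> y \in M -> splits z x y -> z \in M.
Proof.
move=> /andP[_ /forall_inP modM] xM yM; apply: contraTT; rewrite negbK => zM.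
have /orP[/forall_inP Ez | /forall_inP nEz] : [forall m in M, E z m] ||
  [forall m in M, ~~ E z m] by apply: modM; rewrite in_setC.
- by rewrite /splits !Ez.
- by rewrite /splits !(negbTE (nEz _ _)).
Qed.

Lemma span_step_module (M : {set V}) p q :
  is_module E M -> span_step p q ->
  (p.1 \in M) && (p.2 \in M) = (q.1 \in M) && (q.2 \in M).
Proof.
move=> modM [[-> ->] | [q1 [splq splp]]]; first exact: andbC.
rewrite q1; apply/andP/andP => -[p1M] => [p2M | q2M]; split=> //.
- exact: splits_module_mem splq.
- exact: splits_module_mem splp.
Qed.

Lemma reach_mem_span_module v w x y :
  stc_closure span_step (v, w) (x, y) -> x \in span_module E v w.
Proof.
move=> cl; apply/bigcapP => M /andP[/andP[modM vM] wM].
pose inM (p : V * V) := (p.1 \in M) && (p.2 \in M).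
suff /andP[] : inM (x, y) by [].
apply: (stc_closure_invariant (P := inM) _ _ cl); last by rewrite /inM vM wM.
move=> p q; rewrite /inM => pM.
by case=> /(span_step_module modM) => [<- | ->].
Qed.

End SpanStep.

Section SpanClosureModule.
Variables (V : finType) (E : rel V).
Hypothesis symE : symmetric E.
Variables v w : V.

Let reach (p : V * V) := stc_closure (span_step E) (v, w) p.

Lemma reach_step p q :
  reach p -> span_step E p q \/ span_step E q p -> reach q.
Proof. by move=> rp step; apply: t_trans rp _; apply: t_step. Qed.

Lemma reach_swap p : reach p -> reach (p.2, p.1).
Proof. by move=> rp; apply: reach_step rp _; do 2 left. Qed.

Lemma reach_start : reach (v, w).
Proof. by apply: (@reach_swap (w, v)); apply: t_step; do 2 left. Qed.

Definition reach_set : {set V} := [set x | `[< exists y, reach (x, y) >]].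

Lemma mem_reach_set x : x \in reach_set <-> exists y, reach (x, y).
Proof. by rewrite inE asboolE. Qed.

Lemma reach_mem_snd p : reach p -> p.2 \in reach_set.
Proof. by move/reach_swap => rp; apply/mem_reach_set; exists p.1. Qed.

Lemma splits_swap u x y : splits E u x y -> ~~ splits E y x u -> splits E x y u.
Proof.
rewrite /splits negbK (symE x y) (symE x u) => spl /eqP ->.
by rewrite (symE y u) eq_sym.
Qed.

Lemma reach_splits_mem p u : reach p -> splits E u p.1 p.2 -> u \in reach_set.
Proof.
move=> rp spl; have [spl2 | nspl2] := boolP (splits E p.2 p.1 u).
- have: reach (p.1, u) by apply: reach_step rp _; left; right.
  exact: reach_mem_snd.
- have: reach (p.2, u).
    apply: reach_step (reach_swap rp) _; left; right.
    by split=> //=; split; [rewrite splitsC | apply: splits_swap].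
  exact: reach_mem_snd.
Qed.

Lemma outside_reach_set_adj u : u \notin reach_set ->
  forall p, reach p -> E u p.1 = E u v /\ E u p.2 = E u v.
Proof.
move=> uC.
have nosplit q : reach q -> E u q.1 = E u q.2.
  by move=> rq; apply/eqP/negPn; apply: contraNN uC; apply: reach_splits_mem.
pose adj_v q := reach q /\ E u q.1 = E u v /\ E u q.2 = E u v.
move=> p rp; suff [] : adj_v p by [].
apply: (stc_closure_invariant (P := adj_v) _ _ rp)
  => [q q' [rq [q1 q2]] step |].
- have rq' := reach_step rq step.
  have q'1 : E u q'.1 = E u v.
    by case: step => [[[-> _] | [-> _]] | [[_ <-] | [<- _]]].
  by split=> //; rewrite -(nosplit _ rq').
- by split; [exact: reach_start | rewrite /= -(nosplit _ reach_start)].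
Qed.

Lemma reach_set_module : is_module E reach_set.
Proof.
apply/andP; split.
  by apply/set0Pn; exists v; apply/mem_reach_set; exists w; apply: reach_start.
apply/forall_inP => u; rewrite in_setC => uC.
have adj m : m \in reach_set -> E u m = E u v.
  by case/mem_reach_set => y /(outside_reach_set_adj uC) [].
by case: (boolP (E u v)) => Euv; apply/orP; [left | right];
  apply/forall_inP => m /adj ->.
Qed.

Lemma span_module_reach u : u \in span_module E v w -> exists y, reach (u, y).
Proof.
have vC : v \in reach_set by apply/mem_reach_set; exists w; apply: reach_start.
have wC : w \in reach_set := reach_mem_snd reach_start.
move/bigcapP/(_ reach_set); rewrite reach_set_module vC wC.
by move/(_ isT)/mem_reach_set.
Qed.

End SpanClosureModule.

Lemma span_moduleP (V : finType) (E : rel V) v w u : symmetric E ->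
  u \in span_module E v w <-> exists y, stc_closure (span_step E) (v, w) (u, y).
Proof.
move=> symE; split; first exact: span_module_reach.
by case=> y; apply: reach_mem_span_module.
Qed.

Theorem lemma3p8 :
  exists phi : stc_form,
    {subset fv phi <= [:: 0; 1; 2]} /\
    forall (V : finType) (E : rel V), simple_graph E ->
    forall v1 v2 : V,
      forall a : nat -> V, a 0 = v1 -> a 1 = v2 ->
        forall u : V, sat E phi (upd a 2 u) <-> u \in span_module E v1 v2.
Proof.
exists span_form; split; first by [].
move=> V E [_ symE _] v1 v2 a <- <- u.
by rewrite sat_span_form span_moduleP.
Qed.
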